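(* Assume (C1) and (C2). Then for every $u\in\mathbb{R}^{\mathbb{Z}_K\times\mathbb{Z}_M}$, $\sum_{k\in\mathbb{Z}_K}\sum_{j\in\mathbb{Z}_M}\big(u_{k,j}B_{k,j}(u)-\partial_{k,j}B_{k,j}(u)\big)=0.$
   Context: Fix integers $K,M\ge1$; $\mathbb{Z}_m=\mathbb{Z}/m\mathbb{Z}$, $\mathbb{Z}_m^*=\mathbb{Z}_m\setminus\{0\}$; component indices modulo $K$, site indices modulo $M$. Real coefficients $\alpha_k$, $\beta_k^l,\gamma_k^l$ ($l\in\mathbb{Z}_K^*$), $\lambda_k^{k-l,k-l'}$ ($l,l'\in\mathbb{Z}_K^*$, $l\ne l'$) are given. For $u\in\mathbb{R}^{\mathbb{Z}_K\times\mathbb{Z}_M}$: $w_{k,j}=\frac13(u_{k,j}^2+u_{k,j}u_{k,j+1}+u_{k,j+1}^2)$, $b_{k,j}^l=\frac12(u_{k,j}u_{k+l,j}+u_{k,j+1}u_{k+l,j+1})$, $r_{k,j}^l=u_{k-l,j}u_{k-l,j+1}$, $p_{k,j}^{l,l'}=\frac16(2u_{k-l,j}u_{k-l',j}+u_{k-l,j}u_{k-l',j+1}+u_{k-l,j+1}u_{k-l',j}+2u_{k-l,j+1}u_{k-l',j+1})$, $G_{k,j}=\alpha_k w_{k,j}+\sum_{l\in\mathbb{Z}_K^*}\beta_k^l b_{k,j}^l+\sum_{l\in\mathbb{Z}_K^*}\gamma_k^l r_{k,j}^l+\sum_{l\in\mathbb{Z}_K^*}\sum_{l'\in\mathbb{Z}_K^*,l'\ne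 l}\lambda_k^{k-l,k-l'}p_{k,j}^{l,l'}$, $B_{k,j}(u)=G_{k,j}-G_{k,j-1}$; $\partial_{k,j}=\partial/\partial u_{k,j}$. (C1) $\beta_k^a=2\gamma_{k+a}^a$ for all $k$, $a\in\mathbb{Z}_K^*$; (C2) $\lambda_k^{k-a,k-a'}=\lambda_k^{k-a',k-a}=\lambda_{k-a}^{k,k-a'}$ for all $k$ and $a,a'\in\mathbb{Z}_K^*$, $a\ne a'$. *)

From HB Require Import structures.
From mathcomp Require Import all_boot all_order all_algebra.
From mathcomp Require Import reals topology normedtype derive.
Set Implicit Arguments. Unset Strict Implicit. Unset Printing Implicit Defensive.
Import Order.TTheory GRing.Theory Num.Theory.
Import numFieldNormedType.Exports.
Local Open Scope ring_scope.

(* A state u in R^{Z_K x Z_M} is represented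
   by any u : int -> int -> R, of which only the values at reduced indices
   (k mod K, j mod M) are ever read. *)

Section Defs.
Variable R : realType.
Variables K M : nat.

Definition state := int -> int -> R.

Definition uc (u : state) (k j : int) : R := u (modz k K%:Z) (modz j M%:Z).

Variable alpha : int -> R.
Variables beta gamma : int -> int -> R.
Variable lambda : int -> int -> int -> R.

Definition al (k : int) : R := alpha (modz k K%:Z).
Definition be (k l : int) : R := beta (modz k K%:Z) (modz l K%:Z).
Definition ga (k l : int) : R := gamma (modz k K%:Z) (modz l K%:Z).
Definition la (k a b : int) : R :=
  lambda (modz k K%:Z) (modz a K%:Z) (modz b K%:Z).

Definition ww (u : state) (k j : int) : R :=
  (uc u k j ^+ 2 + uc u k j * uc u k (j + 1) + uc u k (j + 1) ^+ 2) / 3%:R.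
Definition bb (u : state) (k l j : int) : R :=
  (uc u k j * uc u (k + l) j + uc u k (j + 1) * uc u (k + l) (j + 1)) / 2%:R.
Definition rr (u : state) (k l j : int) : R :=
  uc u (k - l) j * uc u (k - l) (j + 1).
Definition pp (u : state) (k l l' j : int) : R :=
  (2%:R * uc u (k - l) j * uc u (k - l') j
   + uc u (k - l) j * uc u (k - l') (j + 1)
   + uc u (k - l) (j + 1) * uc u (k - l') j
   + 2%:R * uc u (k - l) (j + 1) * uc u (k - l') (j + 1)) / 6%:R.

(* sums over l in Z_K^* are over l = 1, ..., K-1 *)
Definition GG (u : state) (k j : int) : R :=
  al k * ww u k j
  + \sum_(1 <= l < K) be k l%:Z * bb u k l%:Z j
  + \sum_(1 <= l < K) ga k l%:Z * rr u k l%:Z j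
  + \sum_(1 <= l < K) \sum_(1 <= l' < K | l' != l)
        la k (k - l%:Z) (k - l'%:Z) * pp u k l%:Z l'%:Z j.

Definition BB (u : state) (k j : int) : R := GG u k j - GG u k (j - 1).

Definition upd (u : state) (k j : int) (t : R) : state :=
  fun k' j' => if (modz k' K%:Z == modz k K%:Z) && (modz j' M%:Z == modz j M%:Z)
               then t else u k' j'.

Definition pd (F : state -> R) (u : state) (k j : int) : R :=
  derive1 (fun t => F (upd u k j t)) (uc u k j).

Definition C1 : Prop :=
  forall k a : int, modz a K%:Z != 0 -> be k a = 2%:R * ga (k + a) a.

Definition C2 : Prop :=
  forall k a a' : int, modz a K%:Z != 0 -> modz a' K%:Z != 0 ->
    modz a K%:Z != modz a' K%:Z ->
    la k (k - a) (k - a') = la k (k - a') (k - a) /\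
    la k (k - a) (k - a') = la (k - a) k (k - a').

End Defs.

From Pilot Require Import Defs.
From mathcomp Require Import all_boot all_order all_algebra.
From mathcomp Require Import reals topology normedtype derive.
From mathcomp Require Import ring zify.
From mathcomp Require boolp.
Import Order.TTheory GRing.Theory Num.Theory.
Import numFieldNormedType.Exports.
Set Implicit Arguments. Unset Strict Implicit. Unset Printing Implicit Defensive.
Local Open Scope ring_scope.

(* Write X_j for the profile k |-> u_{k,j}.  Since G_{k,j} only reads X_j and
   X_{j+1}, summation by parts turns sum u B into
   sum_j sum_k G_{k,j} (u_{k,j} - u_{k,j+1}).  Conditions (C1) and (C2) make
   sum_k G_{k,j} (x_k - y_k) a discrete gradient of the cubic
     H(x) = sum_k alpha_k x_k^3 / 3 + sum_{l,k} gamma_{k+l}^l x_k^2 x_{k+l}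
            + 1/3 sum_{k,a,b distinct} lambda_k^{a,b} x_k x_a x_b,
   so the sum telescopes to sum_j (H(X_j) - H(X_{j+1})) = 0 around the
   periodic lattice.  As for the derivative part, B_{k,j} is affine in u_{k,j}
   with slope alpha_k (u_{k,j+1} - u_{k,j-1}) / 3, whose sum over j vanishes
   as well. *)

Lemma eqz_modN (m n d : int) : (- m == - n %[mod d])%Z = (m == n %[mod d])%Z.
Proof.
have e1 : m + n - m = n by ring.
have e2 : m + n - n = m by ring.
by rewrite -(eqz_modDl (m + n)) e1 e2 eq_sym.
Qed.

Lemma eqz_modBl (p m n d : int) : (p - m == p - n %[mod d])%Z = (m == n %[mod d])%Z.
Proof. by rewrite eqz_modDl eqz_modN. Qed.

Lemma modz_small_nat (x N : nat) : (x < N)%N -> modz x%:Z N%:Z = x%:Z.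
Proof. by move=> ltxN; rewrite modz_small //; apply/andP; split => //; lia. Qed.

Lemma eqz_mod_small_nat (x y N : nat) : (x < N)%N -> (y < N)%N ->
  (x%:Z == y%:Z %[mod N%:Z])%Z = (x == y).
Proof. by move=> ltxN ltyN; rewrite !modz_small_nat. Qed.

Lemma modz_addn_neq (N l : nat) (k : int) : (0 < l < N)%N ->
  (k + l%:Z != k %[mod N%:Z])%Z.
Proof.
move=> hl; rewrite -{2}(addr0 k) eqz_modDl mod0z modz_small_nat; last by lia.
by apply/eqP; lia.
Qed.

Lemma modz_subn_neq (N l : nat) (k : int) : (0 < l < N)%N ->
  (k - l%:Z != k %[mod N%:Z])%Z.
Proof.
move=> hl; rewrite -{2}(subr0 k) eqz_modBl mod0z modz_small_nat; last by lia.
by apply/eqP; lia.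
Qed.

Definition periodic (T : Type) (N : nat) (f : int -> T) :=
  forall x, f (modz x N%:Z) = f x.

Section PeriodicSums.
Variables (V : nmodType) (N : nat) (f : int -> V).
Hypothesis f_periodic : periodic N f.

Lemma periodicD (x c : int) : f (modz x N%:Z + c) = f (x + c).
Proof. by rewrite -f_periodic modzDml f_periodic. Qed.

Lemma sum_periodic_shift1 :
  \sum_(0 <= i < N) f (i%:Z + 1) = \sum_(0 <= i < N) f i%:Z.
Proof.
case: N f_periodic => [|n] fP; first by rewrite !big_geq.
rewrite big_nat_recr //= [RHS]big_nat_recl // addrC.
have -> : f (n%:Z + 1) = f 0.
  by rewrite -fP -[RHS]fP (_ : n%:Z + 1 = n.+1%:Z) ?modzz ?mod0z //; lia.
by congr (_ + _); apply: eq_bigr => i _; congr f; lia.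
Qed.

End PeriodicSums.

Definition distinct3 (k a b : nat) := [&& k != a, k != b & a != b].

Lemma distinct3_swap k a b : distinct3 a k b = distinct3 k a b.
Proof.
rewrite /distinct3 (eq_sym a k).
by case: (k == a); case: (k == b); case: (a == b).
Qed.

Lemma distinct3_rot k a b : distinct3 b k a = distinct3 k a b.
Proof.
rewrite /distinct3 (eq_sym b k) (eq_sym b a).
by case: (k == a); case: (k == b); case: (a == b).
Qed.

Section PeriodicSumsReindex.
Variables (V : zmodType) (N : nat).

Lemma sum_periodic_shift_nat (f : int -> V) (m : nat) : periodic N f ->
  \sum_(0 <= i < N) f (i%:Z + m%:Z) = \sum_(0 <= i < N) f i%:Z.
Proof.
elim: m f => [|m IHm] f fP; first by apply: eq_bigr => i _; rewrite addr0.
have gP : periodic N (fun x => f (x + m%:Z)) by move=> x; apply: periodicD.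
rewrite -(IHm f fP) -(sum_periodic_shift1 gP).
by apply: eq_bigr => i _; congr f; lia.
Qed.

Lemma sum_periodic_shift (f : int -> V) (a : int) : periodic N f ->
  \sum_(0 <= i < N) f (i%:Z + a) = \sum_(0 <= i < N) f i%:Z.
Proof.
move=> fP; have [->|N_gt0] := posnP N; first by rewrite !big_geq.
rewrite -(sum_periodic_shift_nat `|modz a N%:Z|%N fP).
apply: eq_bigr => i _; rewrite gez0_abs ?modz_ge0 //; last by rewrite eqz_nat -lt0n.
by rewrite -[RHS]fP modzDmr fP.
Qed.

Lemma sum_periodic_rev (f : int -> V) (k : nat) : periodic N f ->
  \sum_(0 <= l < N) f (k%:Z - l%:Z) = \sum_(0 <= a < N) f a%:Z.
Proof.
move=> fP; rewrite big_nat_rev -(sum_periodic_shift (k%:Z + 1 - N%:Z) fP).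
by apply: eq_big_nat => i /andP[_ ltiN]; congr f; lia.
Qed.

Lemma sum_periodic_subn (f : int -> V) (k : nat) : (k < N)%N -> periodic N f ->
  \sum_(1 <= l < N) f (k%:Z - l%:Z) = \sum_(0 <= a < N | a != k) f a%:Z.
Proof.
move=> ltkN fP; have := sum_periodic_rev k fP.
rewrite big_ltn; last by lia.
rewrite subr0 [in RHS](bigD1_seq k) /= ?iota_uniq //; last first.
  by rewrite mem_index_iota; lia.
by move/addrI.
Qed.

Lemma sum_periodic_telescope (f : int -> V) : periodic N f ->
  \sum_(0 <= i < N) (f i%:Z - f (i%:Z + 1)) = 0.
Proof. by move=> fP; rewrite sumrB sum_periodic_shift1 // subrr. Qed.

Lemma sum_periodic_subn_pairs (h : int -> int -> V) (k : nat) : (k < N)%N ->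
  (forall a b, h (modz a N%:Z) b = h a b) -> (forall a b, h a (modz b N%:Z) = h a b) ->
  \sum_(1 <= l < N) \sum_(1 <= l' < N | l' != l) h (k%:Z - l%:Z) (k%:Z - l'%:Z)
  = \sum_(0 <= a < N) \sum_(0 <= b < N | distinct3 k a b) h a%:Z b%:Z.
Proof.
move=> ltkN hP1 hP2.
pose g a := \sum_(0 <= b < N | (b != k) && (modz b%:Z N%:Z != modz a N%:Z)) h a b%:Z.
have gP : periodic N g by move=> a; apply: eq_big => b; rewrite ?modz_mod ?hP1.
transitivity (\sum_(1 <= l < N) g (k%:Z - l%:Z)).
  apply: eq_big_nat => l /andP[l_gt0 ltlN].
  pose F b := if (b != k%:Z - l%:Z %[mod N%:Z])%Z then h (k%:Z - l%:Z) b else 0.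
  have FP : periodic N F by move=> b; rewrite /F modz_mod hP2.
  transitivity (\sum_(1 <= l' < N) F (k%:Z - l'%:Z)).
    rewrite big_mkcond; apply: eq_big_nat => l' /andP[l'_gt0 ltl'N].
    by rewrite /F eqz_modBl eqz_mod_small_nat.
  by rewrite sum_periodic_subn // /g big_mkcondr.
rewrite sum_periodic_subn // big_mkcond; apply: eq_big_nat => a /andP[_ ltaN].
rewrite /g; case: (eqVneq a k) => [->|neq_ak] /=.
  by rewrite big_pred0 // => b; rewrite /distinct3 eqxx.
rewrite big_nat_cond [RHS]big_nat_cond; apply: eq_bigl => b.
apply/andb_id2l => /andP[_ ltbN]; rewrite eqz_mod_small_nat // /distinct3.
by rewrite (eq_sym k a) neq_ak (eq_sym k b) (eq_sym a b).
Qed.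

End PeriodicSumsReindex.

Section CubicPotential.
Variables (R : realType) (K : nat).
Variables (alpha : int -> R) (beta gamma : int -> int -> R).
Variable lambda : int -> int -> int -> R.
Local Notation AL := (al K alpha).
Local Notation BE := (be K beta).
Local Notation GA := (ga K gamma).
Local Notation LA := (la K lambda).

Definition pform (A B : int -> R) (a b : int) : R :=
  (2%:R * A a * A b + A a * B b + B a * A b + 2%:R * B a * B b) / 6%:R.

Definition Gw (A B : int -> R) (k : int) : R :=
  AL k * ((A k ^+ 2 + A k * B k + B k ^+ 2) / 3%:R).
Definition Gb (A B : int -> R) (k : int) : R :=
  \sum_(1 <= l < K) BE k l%:Z * ((A k * A (k + l%:Z) + B k * B (k + l%:Z)) / 2%:R).
Definition Gr (A B : int -> R) (k : int) : R :=
  \sum_(1 <= l < K) GA k l%:Z * (A (k - l%:Z) * B (k - l%:Z)).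
Definition Gp (A B : int -> R) (k : int) : R :=
  \sum_(1 <= l < K) \sum_(1 <= l' < K | l' != l)
     LA k (k - l%:Z) (k - l'%:Z) * pform A B (k - l%:Z) (k - l'%:Z).
Definition Gpair (A B : int -> R) (k : int) : R :=
  Gw A B k + Gb A B k + Gr A B k + Gp A B k.

Lemma GG_Gpair M u k j : GG K M alpha beta gamma lambda u k j =
  Gpair (fun x => uc K M u x j) (fun x => uc K M u x (j + 1)) k.
Proof. by []. Qed.

Definition sum3 (F : nat -> nat -> nat -> R) : R :=
  \sum_(0 <= k < K) \sum_(0 <= a < K) \sum_(0 <= b < K) F k a b.

Lemma sum3D F G : sum3 F + sum3 G = sum3 (fun k a b => F k a b + G k a b).
Proof.
rewrite /sum3 -big_split; apply: eq_bigr => k _.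
by rewrite -big_split; apply: eq_bigr => a _; rewrite -big_split.
Qed.

Lemma sum3B F G : sum3 F - sum3 G = sum3 (fun k a b => F k a b - G k a b).
Proof.
rewrite /sum3 -sumrB; apply: eq_bigr => k _.
by rewrite -sumrB; apply: eq_bigr => a _; rewrite -sumrB.
Qed.

Lemma eq_sum3 F G :
  (forall k a b, (k < K)%N -> (a < K)%N -> (b < K)%N -> F k a b = G k a b) ->
  sum3 F = sum3 G.
Proof.
move=> eqFG; apply: eq_big_nat => k /andP[_ ltkK].
apply: eq_big_nat => a /andP[_ ltaK]; apply: eq_big_nat => b /andP[_ ltbK].
exact: eqFG.
Qed.

Lemma sum3_swap F : sum3 F = sum3 (fun k a b => F a k b).
Proof. by rewrite /sum3 exchange_big_nat. Qed.

Lemma sum3_rot F : sum3 F = sum3 (fun k a b => F b k a).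
Proof.
by rewrite /sum3 exchange_big_nat; apply: eq_bigr => a _; rewrite exchange_big_nat.
Qed.

Definition ham_alpha (X : int -> R) : R :=
  \sum_(0 <= k < K) AL k%:Z * (X k%:Z ^+ 3 / 3%:R).
Definition ham_gamma (X : int -> R) : R :=
  \sum_(1 <= l < K) \sum_(0 <= k < K)
    GA (k%:Z + l%:Z) l%:Z * (X k%:Z ^+ 2 * X (k%:Z + l%:Z)).
Definition ham_lambda (X : int -> R) : R :=
  sum3 (fun k a b => if distinct3 k a b
                     then LA k%:Z a%:Z b%:Z * (X k%:Z * X a%:Z * X b%:Z) else 0)
  / 3%:R.
Definition ham (X : int -> R) : R := ham_alpha X + ham_gamma X + ham_lambda X.

Lemma sum_Gw_diff X Y :
  \sum_(0 <= k < K) Gw X Y k%:Z * (X k%:Z - Y k%:Z) = ham_alpha X - ham_alpha Y.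
Proof. by rewrite /ham_alpha -sumrB; apply: eq_bigr => k _; rewrite /Gw; ring. Qed.

Section Conditions.
Hypothesis hC1 : C1 K beta gamma.
Hypothesis hC2 : C2 K lambda.

Lemma sum_Gb_Gr_diff X Y : periodic K X -> periodic K Y ->
  \sum_(0 <= k < K) Gb X Y k%:Z * (X k%:Z - Y k%:Z)
  + \sum_(0 <= k < K) Gr X Y k%:Z * (X k%:Z - Y k%:Z) = ham_gamma X - ham_gamma Y.
Proof.
move=> XP YP.
have -> : \sum_(0 <= k < K) Gr X Y k%:Z * (X k%:Z - Y k%:Z) =
    \sum_(1 <= l < K) \sum_(0 <= k < K)
      GA (k%:Z + l%:Z) l%:Z * (X k%:Z * Y k%:Z) * (X (k%:Z + l%:Z) - Y (k%:Z + l%:Z)).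
  under eq_bigr do rewrite /Gr mulr_suml.
  rewrite exchange_big_nat; apply: eq_bigr => l _.
  pose f k := GA k l%:Z * (X (k - l%:Z) * Y (k - l%:Z)) * (X k - Y k).
  have fP : periodic K f.
    by move=> x; rewrite /f /ga modz_mod !(periodicD XP) !(periodicD YP) XP YP.
  by rewrite -(sum_periodic_shift l%:Z fP); apply: eq_bigr => k _; rewrite /f addrK.
under eq_bigr do rewrite /Gb mulr_suml.
rewrite exchange_big_nat -big_split /ham_gamma -sumrB.
apply: eq_big_nat => l /andP[l_gt0 ltlK].
rewrite -sumrB -big_split; apply: eq_bigr => k _.
have l_neq0 : modz l%:Z K%:Z != 0 by rewrite modz_small_nat //; apply/eqP; lia.
by rewrite /= (hC1 k%:Z l_neq0); field.
Qed.

Lemma la_sym_distinct (k a b : nat) :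
  (k < K)%N -> (a < K)%N -> (b < K)%N -> distinct3 k a b ->
  LA k%:Z a%:Z b%:Z = LA k%:Z b%:Z a%:Z /\ LA k%:Z a%:Z b%:Z = LA a%:Z k%:Z b%:Z.
Proof.
move=> ltkK ltaK ltbK /and3P[nka nkb nab].
have modz_subn_neq0 x y : (x < K)%N -> (y < K)%N -> x != y -> modz (x%:Z - y%:Z) K%:Z != 0.
  move=> ltxK ltyK nxy.
  by rewrite -(mod0z K%:Z) -(subrr x%:Z) eqz_modBl eqz_mod_small_nat // eq_sym.
have nkakb : modz (k%:Z - a%:Z) K%:Z != modz (k%:Z - b%:Z) K%:Z.
  by rewrite eqz_modBl eqz_mod_small_nat.
have subKr (x y : int) : x - (x - y) = y by ring.
have := hC2 k%:Z (modz_subn_neq0 _ _ ltkK ltaK nka) (modz_subn_neq0 _ _ ltkK ltbK nkb) nkakb.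
by rewrite !subKr.
Qed.

Definition Gp_term (X Y : int -> R) (k a b : nat) : R :=
  if distinct3 k a b
  then LA k%:Z a%:Z b%:Z * (pform X Y a%:Z b%:Z * (X k%:Z - Y k%:Z)) else 0.

(* (C2) makes lambda symmetric on distinct triples, which lets the three
   rotations combine into the increment of the monomial x_k x_a x_b. *)
Lemma Gp_term_cyclic X Y (k a b : nat) : (k < K)%N -> (a < K)%N -> (b < K)%N ->
  Gp_term X Y k a b + Gp_term X Y a k b + Gp_term X Y b k a =
  if distinct3 k a b
  then LA k%:Z a%:Z b%:Z * (X k%:Z * X a%:Z * X b%:Z - Y k%:Z * Y a%:Z * Y b%:Z)
  else 0.
Proof.
move=> ltkK ltaK ltbK; rewrite /Gp_term (distinct3_swap k a b) (distinct3_rot k a b).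
case: ifP => [dkab|_]; last by rewrite !addr0.
have [la_ab la_ka] := la_sym_distinct ltkK ltaK ltbK dkab.
have [la_kb la_bk] : LA b%:Z k%:Z a%:Z = LA b%:Z a%:Z k%:Z /\
                      LA b%:Z k%:Z a%:Z = LA k%:Z b%:Z a%:Z.
  by apply: la_sym_distinct => //; rewrite distinct3_rot.
by rewrite -la_ka la_bk -la_ab /pform; field.
Qed.

Lemma sum_Gp_diff X Y : periodic K X -> periodic K Y ->
  \sum_(0 <= k < K) Gp X Y k%:Z * (X k%:Z - Y k%:Z) = ham_lambda X - ham_lambda Y.
Proof.
move=> XP YP.
have -> : \sum_(0 <= k < K) Gp X Y k%:Z * (X k%:Z - Y k%:Z) = sum3 (Gp_term X Y).
  apply: eq_big_nat => k /andP[_ ltkK].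
  rewrite /Gp (sum_periodic_subn_pairs (h := fun a b => LA k%:Z a b * pform X Y a b)) //.
  - rewrite mulr_suml; apply: eq_bigr => a _; rewrite big_mkcond mulr_suml.
    by apply: eq_bigr => b _; rewrite /Gp_term; case: ifP; rewrite ?mul0r // mulrA.
  - by move=> x y; rewrite /la /pform modz_mod !XP !YP.
  - by move=> x y; rewrite /la /pform modz_mod !XP !YP.
have sum3_cyclic : sum3 (Gp_term X Y) *+ 3 =
    sum3 (fun k a b => if distinct3 k a b then LA k%:Z a%:Z b%:Z *
       (X k%:Z * X a%:Z * X b%:Z - Y k%:Z * Y a%:Z * Y b%:Z) else 0).
  rewrite mulrSr mulr2n {3}sum3_rot {2}sum3_swap !sum3D.
  by apply: eq_sum3 => k a b; apply: Gp_term_cyclic.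
have three_neq0 : 3%:R != 0 :> R by rewrite pnatr_eq0.
rewrite /ham_lambda -mulrBl sum3B -[sum3 (Gp_term X Y)](mulfK three_neq0).
rewrite mulr_natr sum3_cyclic; congr (_ / _); apply: eq_sum3 => k a b _ _ _.
by case: ifP; rewrite ?subr0 // mulrBr.
Qed.

Lemma sum_Gpair_diff X Y : periodic K X -> periodic K Y ->
  \sum_(0 <= k < K) Gpair X Y k%:Z * (X k%:Z - Y k%:Z) = ham X - ham Y.
Proof.
move=> XP YP.
have -> : ham X - ham Y = (ham_alpha X - ham_alpha Y)
    + (ham_gamma X - ham_gamma Y) + (ham_lambda X - ham_lambda Y) by rewrite /ham; ring.
rewrite -sum_Gw_diff -(sum_Gb_Gr_diff XP YP) -(sum_Gp_diff XP YP) -!big_split /=.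
by apply: eq_bigr => k _; rewrite /Gpair; ring.
Qed.

End Conditions.

(* Only the w-terms see the centre value [A k] quadratically, and there the
   squares cancel; the b-terms cancel in the difference, the r- and p-terms
   read [A] away from [k] only. *)
Lemma Gpair_diff_affine (A A' B C : int -> R) (k : int) :
  (forall x, (x != k %[mod K%:Z])%Z -> A x = A' x) ->
  Gpair A B k - Gpair C A k - AL k * A k * (B k - C k) / 3%:R =
  Gpair A' B k - Gpair C A' k - AL k * A' k * (B k - C k) / 3%:R.
Proof.
move=> eqAA'.
have eq_Gb : Gb A B k - Gb C A k = Gb A' B k - Gb C A' k.
  rewrite /Gb -!sumrB; apply: eq_big_nat => l hl.
  by rewrite (eqAA' (k + l%:Z)) ?modz_addn_neq //; ring.
have eq_Gr : Gr A B k - Gr C A k = Gr A' B k - Gr C A' k.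
  rewrite /Gr -!sumrB; apply: eq_big_nat => l hl.
  by rewrite (eqAA' (k - l%:Z)) ?modz_subn_neq.
have eq_Gp : Gp A B k - Gp C A k = Gp A' B k - Gp C A' k.
  rewrite /Gp -!sumrB; apply: eq_big_nat => l hl.
  rewrite -!sumrB [LHS]big_nat_cond [RHS]big_nat_cond.
  apply: eq_bigr => l' /andP[hl' _].
  by rewrite /pform (eqAA' (k - l%:Z)) ?(eqAA' (k - l'%:Z)) ?modz_subn_neq.
have -> : Gpair A B k - Gpair C A k - AL k * A k * (B k - C k) / 3%:R =
  (Gw A B k - Gw C A k - AL k * A k * (B k - C k) / 3%:R) +
  (Gb A B k - Gb C A k) + (Gr A B k - Gr C A k) + (Gp A B k - Gp C A k).
  by rewrite /Gpair; ring.
rewrite eq_Gb eq_Gr eq_Gp /Gpair /Gw; ring.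
Qed.

End CubicPotential.

Lemma derive1_affine (R : numFieldType) (s c x : R) :
  derive1 (fun t => s * t + c) x = s.
Proof.
rewrite derive1E; apply: derive_val.
have affine_derive := is_deriveD (is_deriveZ s (@is_derive_id R R x 1))
  (@is_derive_cst R R R c x 1).
by apply: (is_derive_eq affine_derive); rewrite /= addr0 -[_%:A]/(s * 1) mulr1.
Qed.

Section Lattice.
Variables (R : realType) (K M : nat).
Variables (alpha : int -> R) (beta gamma : int -> int -> R).
Variable lambda : int -> int -> int -> R.
Local Notation uc := (uc K M).
Local Notation GG := (GG K M alpha beta gamma lambda).
Local Notation BB := (BB K M alpha beta gamma lambda).

Lemma uc_upd (u : state R) k j t x y : uc (upd K M u k j t) x y =
  if (x == k %[mod K%:Z])%Z && (y == j %[mod M%:Z])%Z then t else uc u x y.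
Proof. by rewrite /uc /upd !modz_mod. Qed.

Lemma pd_affine (F : state R -> R) (u : state R) k j (s c : R) :
  (forall t, F (upd K M u k j t) = s * t + c) -> pd K M F u k j = s.
Proof.
move=> Faff; rewrite /pd (_ : (fun t => _) = fun t => s * t + c) ?derive1_affine //.
exact: boolp.funext.
Qed.

Lemma GG_modr (u : state R) k j j' : (j == j' %[mod M%:Z])%Z -> GG u k j = GG u k j'.
Proof.
move/eqP=> eq_jj'; rewrite !GG_Gpair; congr Gpair; apply: boolp.funext => x.
  by rewrite /Defs.uc eq_jj'.
by rewrite /Defs.uc -modzDml eq_jj' modzDml.
Qed.

Lemma pd_BB (u : state R) k j : (0 < M)%N ->
  pd K M (fun v => BB v k j) u k j
  = al K alpha k * (uc u k (j + 1) - uc u k (j - 1)) / 3%:R.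
Proof.
move=> M_gt0; have [M_gt1|M_le1] := ltnP 1 M; last first.
  have M1 : M = 1%N by lia.
  have -> : uc u k (j + 1) = uc u k (j - 1) by rewrite /Defs.uc M1 !modz1.
  rewrite subrr mulr0 mul0r; apply: (pd_affine (c := 0)) => t.
  by rewrite mul0r addr0 /BB (@GG_modr _ _ j (j - 1)) ?subrr // M1 !modz1.
set U := fun x => uc u x j; set Y := fun x => uc u x (j + 1).
set Z := fun x => uc u x (j - 1).
apply: (pd_affine (c := Gpair K alpha beta gamma lambda U Y k
  - Gpair K alpha beta gamma lambda Z U k - al K alpha k * U k * (Y k - Z k) / 3%:R)) => t.
have nj1 : (j + 1 != j %[mod M%:Z])%Z by apply: (@modz_addn_neq M 1); lia.
have nj2 : (j - 1 != j %[mod M%:Z])%Z by apply: (@modz_subn_neq M 1); lia.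
rewrite /BB !GG_Gpair subrK.
have -> : (fun x => uc (upd K M u k j t) x (j + 1)) = Y.
  by apply: boolp.funext => x; rewrite uc_upd (negbTE nj1) andbF.
have -> : (fun x => uc (upd K M u k j t) x (j - 1)) = Z.
  by apply: boolp.funext => x; rewrite uc_upd (negbTE nj2) andbF.
rewrite -(@Gpair_diff_affine _ _ _ _ _ _ (fun x => uc (upd K M u k j t) x j) U).
  by rewrite uc_upd !eqxx /= /Y /Z; ring.
by move=> x nxk; rewrite /= uc_upd (negbTE nxk).
Qed.

Lemma sum_pd_BB (u : state R) : (0 < M)%N ->
  \sum_(0 <= k < K) \sum_(0 <= j < M) pd K M (fun v => BB v k%:Z j%:Z) u k%:Z j%:Z = 0.
Proof.
move=> M_gt0; apply: big1 => k _.
have ukP : periodic M (uc u k%:Z) by move=> y; rewrite /Defs.uc modz_mod.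
rewrite (eq_bigr (fun j : nat => al K alpha k%:Z / 3%:R *
    (uc u k%:Z (j%:Z + 1) - uc u k%:Z (j%:Z + -1)))); last first.
  by move=> j _; rewrite pd_BB //; ring.
by rewrite -mulr_sumr sumrB !sum_periodic_shift // subrr mulr0.
Qed.

Lemma sum_uc_BB_by_parts (u : state R) :
  \sum_(0 <= k < K) \sum_(0 <= j < M) uc u k%:Z j%:Z * BB u k%:Z j%:Z
  = \sum_(0 <= j < M) \sum_(0 <= k < K)
      GG u k%:Z j%:Z * (uc u k%:Z j%:Z - uc u k%:Z (j%:Z + 1)).
Proof.
pose f y := \sum_(0 <= k < K) uc u k%:Z y * GG u k%:Z (y - 1).
have fP : periodic M f.
  move=> y; apply: eq_bigr => k _; rewrite {1}/Defs.uc modz_mod.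
  by congr (_ * _); apply: GG_modr; rewrite modzDml.
transitivity (\sum_(0 <= j < M) \sum_(0 <= k < K) uc u k%:Z j%:Z * GG u k%:Z j%:Z
    - \sum_(0 <= j < M) f j%:Z).
  rewrite exchange_big_nat -sumrB; apply: eq_bigr => j _.
  by rewrite /f -sumrB; apply: eq_bigr => k _; rewrite /BB mulrBr.
rewrite -(sum_periodic_shift1 fP) -sumrB; apply: eq_bigr => j _.
by rewrite /f -sumrB; apply: eq_bigr => k _; rewrite addrK; ring.
Qed.

Lemma sum_uc_BB (u : state R) : C1 K beta gamma -> C2 K lambda ->
  \sum_(0 <= k < K) \sum_(0 <= j < M) uc u k%:Z j%:Z * BB u k%:Z j%:Z = 0.
Proof.
move=> hC1 hC2; rewrite sum_uc_BB_by_parts.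
pose ham_at y := ham K alpha gamma lambda (fun x => uc u x y).
have profileP y : periodic K (fun x => uc u x y) by move=> x; rewrite /Defs.uc modz_mod.
have hamP : periodic M ham_at.
  by move=> y; rewrite /ham_at; congr ham; apply: boolp.funext => x; rewrite /Defs.uc modz_mod.
rewrite -[RHS](sum_periodic_telescope hamP); apply: eq_bigr => j _.
by rewrite /ham_at -(sum_Gpair_diff alpha hC1 hC2 (profileP _) (profileP _)).
Qed.

End Lattice.

Theorem lemma3p3 (R : realType) (K M : nat) (hK : (0 < K)%N) (hM : (0 < M)%N)
  (alpha : int -> R) (beta gamma : int -> int -> R)
  (lambda : int -> int -> int -> R)
  (hC1 : C1 K beta gamma) (hC2 : C2 K lambda) (u : state R) :
  \sum_(0 <= k < K) \sum_(0 <= j < M)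
     (uc K M u k%:Z j%:Z * BB K M alpha beta gamma lambda u k%:Z j%:Z
      - pd K M (fun v => BB K M alpha beta gamma lambda v k%:Z j%:Z) u k%:Z j%:Z)
  = 0.
Proof.
under eq_bigr do rewrite sumrB.
by rewrite sumrB sum_uc_BB // sum_pd_BB // subrr.
Qed.
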